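(* Let $p, q$ be integers with $p, q \ge 2$. Then for every $\lambda \in \Lambda^{p,q}_{+}$, \[ \mathcal{F}(\lambda; \Lambda^{p,q}) \simeq \begin{cases} \mathcal{F}(T^{p,q}_{2,2}(\lambda); \Lambda^{2,2}) & \text{if } \lambda \in \operatorname{Fix}(T^{2,2}_{p,q} \circ T^{p,q}_{2,2}),\\ \mathrm{pt} & \text{otherwise,} \end{cases} \] where $\simeq$ denotes homotopy equivalence and $\mathrm{pt}$ the one-point space.
   Context: $\mathbb{N}=\{0,1,2,\dots\}$. For an additive commutative monoid $\Lambda$ that is cancellative and has no non-trivial invertible elements, define the partial order $\lambda \le \mu$ iff there is $\nu\in\Lambda$ with $\lambda+\nu=\mu$; write $\lambda<\mu$ for $\lambda\le\mu$, $\lambda\ne\mu$. Let $\Lambda_+=\Lambda\setminus\{0\}$. For a poset $P$, $|P|$ denotes the geometric realization of its order complex (simplices are the finite nonempty chains), and $(x,y)_P=\{z\in P: x<z<y\}$. The Frobenius complex is $\mathcal{F}(\lambda;\Lambda)=|(0,\lambda)_\Lambda|$ for $\lambda\in\Lambda_+$. For positive integers $p,q$, $\Lambda^{p,q}=\langle a,b\mid pa=qb\rangle$ is the quotient of the free commutative monoid $\mathbb{N}a\oplus\mathbb{N}b$ by the congruence generated by $\lambda+pa\sim\lambda+qb$ ($\lambda\in\mathbb{N}a\oplus\mathbb{N}b$). For positive integers $p,q$, the transition function $\tau^p_q:\mathbb{N}\to\mathbb{N}$ is $\tau^p_q(mp+n)=mq+\min\{n,q-1\}$ for $m\in\mathbb{N}$,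 $0\le n<p$. For positive integers $p,q,r,s$, the transition map $T^{p,q}_{r,s}:\Lambda^{p,q}\to\Lambda^{r,s}$ is $T^{p,q}_{r,s}(ma+nb)=\tau^p_r(m)a+\tau^q_s(n)b$ ($m,n\in\mathbb{N}$). For a function $f$ on a set $X$, $\operatorname{Fix} f=\{x\in X: f(x)=x\}$. *)

From Stdlib Require Import Relation_Operators.
From HB Require Import structures.
From mathcomp Require Import all_boot all_order all_algebra.
From mathcomp Require Import all_classical all_reals all_analysis.
Import numFieldNormedType.Exports.
Import Order.TTheory GRing.Theory Num.Theory.
Import ArrowAsProduct.

Set Implicit Arguments.
Unset Strict Implicit.
Unset Printing Implicit Defensive.

Local Open Scope classical_set_scope.
Local Open Scope ring_scope.

(** Free commutative monoid N a (+) N b, an element m a + n b is (m, n). *)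
Definition freeM := (nat * nat)%type.
Definition addF (x y : freeM) : freeM := ((x.1 + y.1)%N, (x.2 + y.2)%N).

Definition stepF (p q : nat) (x y : freeM) : Prop :=
  exists l : freeM, x = addF l (p, 0%N) /\ y = addF l (0%N, q).

(** The congruence generated: its equivalence closure (the generating
    relation is already translation invariant). *)
Definition congF (p q : nat) : freeM -> freeM -> Prop :=
  clos_refl_sym_trans freeM (stepF p q).

Definition Lam (p q : nat) := {S : set freeM | exists x, S = congF p q x}.

HB.instance Definition _ (p q : nat) := gen_eqMixin (Lam p q).
HB.instance Definition _ (p q : nat) := gen_choiceMixin (Lam p q).

Definition clsL (p q : nat) (x : freeM) : Lam p q :=
  exist _ (congF p q x) (ex_intro _ x erefl).

Definition repL (p q : nat) (a : Lam p q) : freeM := projT1 (cid (proj2_sig a)).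

Definition zeroL (p q : nat) : Lam p q := clsL p q (0%N, 0%N).
Definition addL (p q : nat) (a b : Lam p q) : Lam p q :=
  clsL p q (addF (repL a) (repL b)).

Arguments zeroL p q : clear implicits.
Arguments clsL p q x : clear implicits.

Definition leL (p q : nat) (a b : Lam p q) : Prop := exists c, addL a c = b.
Definition ltL (p q : nat) (a b : Lam p q) : Prop := leL a b /\ a <> b.

Definition ointL (p q : nat) (x y : Lam p q) : set (Lam p q) :=
  [set z | ltL x z /\ ltL z y].

Definition tau (p q : nat) (k : nat) : nat :=
  ((k %/ p) * q + minn (k %% p) (q - 1))%N.

Definition Tmap (p q r s : nat) (a : Lam p q) : Lam r s :=
  clsL r s (tau p r (repL a).1, tau q s (repL a).2).

Arguments Tmap p q r s a : clear implicits.

(** * Geometric realization of the order complex of a poset (P, le),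
    realized inside R^V (product topology): the points are the weight
    functions w >= 0 supported in P, of total weight 1, whose support
    is a chain.  (For finite P this is the usual geometric realization.) *)
Definition realization (R : realType) (V : choiceType) (le : V -> V -> Prop)
    (P : set V) : set (V -> R) :=
  [set w | (forall v, 0 <= w v) /\ (forall v, ~ P v -> w v = 0) /\
           (\sum_(v \in P) w v = 1) /\
           (forall u v, 0 < w u -> 0 < w v -> le u v \/ le v u)].

Arguments realization R {V} le P.

Definition Frob (R : realType) (p q : nat) (lam : Lam p q) : set (Lam p q -> R) :=
  realization R (@leL p q) (ointL (zeroL p q) lam).

Arguments Frob R {p q} lam.

Definition unitI (R : realType) : set R := [set t | 0 <= t <= 1].

Arguments unitI R : clear implicits.

Definition homotopic_on (R : realType) (S T : topologicalType)
    (X : set S) (Y : set T) (f g : S -> T) : Prop :=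
  exists H : S * R -> T,
    {within X `*` (unitI R), continuous H} /\
    (forall x t, X x -> unitI R t -> Y (H (x, t))) /\
    (forall x, X x -> H (x, 0) = f x) /\
    (forall x, X x -> H (x, 1) = g x).

Definition homotopy_equivalent (R : realType) (S T : topologicalType)
    (X : set S) (Y : set T) : Prop :=
  exists (f : S -> T) (g : T -> S),
    {within X, continuous f} /\ (f @` X `<=` Y) /\
    {within Y, continuous g} /\ (g @` Y `<=` X) /\
    homotopic_on R X X (g \o f) id /\ homotopic_on R Y Y (f \o g) id.

Definition pt (R : realType) : set R := [set 0].
Arguments pt R : clear implicits.

(* Write c for T^{2,2}_{p,q} \o T^{p,q}_{2,2}.  Coordinatewise properties of the
   transition functions show that c is monotone and below the identity on
   Lambda^{p,q}, and that T^{p,q}_{2,2} \o T^{2,2}_{p,q} is the identity.  By the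
   order homotopy lemma (monotone maps f <= g between finite posets induce
   homotopic maps of realizations), |c| is homotopic to the identity of
   F(lambda).  If c lambda = lambda, the two transition maps restrict to maps
   between (0, lambda) and (0, T lambda) with composites c and the identity,
   which gives the equivalence.  Otherwise c lambda lies in (0, lambda) and
   c x <= c lambda for every x <= lambda, so |c| is also homotopic to the
   constant map at the vertex c lambda, and F(lambda) is contractible. *)

From Stdlib Require Import Relation_Operators.
From mathcomp Require Import all_boot all_order all_algebra.
From mathcomp Require Import all_classical all_reals all_analysis.
From mathcomp Require Import zify finmap lra.
Import numFieldNormedType.Exports.
Import ArrowAsProduct.
Import Order.TTheory GRing.Theory Num.Theory.

Set Implicit Arguments.
Unset Strict Implicit.
Unset Printing Implicit Defensive.

(** * The monoid Lambda^{p,q} and its transition maps *)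

Section Lambda.
Variables (p q : nat).

(* [m a + n b |-> q m + p n] is constant on congruence classes, so it gives a
   rank function on Lambda^{p,q}, strictly increasing for its order. *)
Definition degF (x : freeM) : nat := (q * x.1 + p * x.2)%N.

Lemma congF_refl x : congF p q x x.
Proof. exact: rst_refl. Qed.

Lemma congF_sym x y : congF p q x y -> congF p q y x.
Proof. exact: rst_sym. Qed.

Lemma congF_trans x y z : congF p q x y -> congF p q y z -> congF p q x z.
Proof. exact: rst_trans. Qed.

Lemma congF_degF x y : congF p q x y -> degF x = degF y.
Proof.
elim=> [a b [l [-> ->]]|//|a b _ ->|a b c _ -> _ ->] //.
by rewrite /degF /addF /=; lia.
Qed.

Lemma addFC x y : addF x y = addF y x.
Proof. by rewrite /addF addnC [(x.2 + _)%N]addnC. Qed.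

Lemma congF_addr z x y : congF p q x y -> congF p q (addF x z) (addF y z).
Proof.
elim=> [a b [l [-> ->]]|a|a b _|a b c _ h1 _]; last 3 first.
- exact: rst_refl.
- exact: rst_sym.
- exact: rst_trans h1.
apply: rst_step; exists (addF l z); rewrite /addF /=; split; congr pair; lia.
Qed.

Lemma congF_add x y x' y' : congF p q x x' -> congF p q y y' ->
  congF p q (addF x y) (addF x' y').
Proof.
move=> hx hy; apply: congF_trans (congF_addr y hx) _.
by rewrite addFC [addF x' y']addFC; exact: congF_addr.
Qed.

Lemma clsL_congF x y : congF p q x y -> clsL p q x = clsL p q y.
Proof.
move=> hxy; apply: eq_exist; apply/seteqP; split => z hz.
- exact: congF_trans (congF_sym hxy) hz.
- exact: congF_trans hxy hz.
Qed.

Lemma congF_clsL x y : clsL p q x = clsL p q y -> congF p q x y.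
Proof. by move=> /(congr1 sval) /= ->; exact: congF_refl. Qed.

Lemma repLK (a : Lam p q) : clsL p q (repL a) = a.
Proof.
rewrite /repL; case: cid => x /= e.
by case: a e => S hS /= e; subst S; exact: eq_exist.
Qed.

Lemma clsLP (a : Lam p q) : exists x, a = clsL p q x.
Proof. by exists (repL a); rewrite repLK. Qed.

Lemma repL_clsL x : congF p q (repL (clsL p q x)) x.
Proof. by apply: congF_clsL; rewrite repLK. Qed.

Definition degL (a : Lam p q) : nat := degF (repL a).

Lemma degL_clsL x : degL (clsL p q x) = degF x.
Proof. exact: congF_degF (repL_clsL x). Qed.

Lemma addL_clsL x y : addL (clsL p q x) (clsL p q y) = clsL p q (addF x y).
Proof. by apply: clsL_congF; apply: congF_add; exact: repL_clsL. Qed.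

Lemma leL_clsL x y : (x.1 <= y.1)%N -> (x.2 <= y.2)%N ->
  leL (clsL p q x) (clsL p q y).
Proof.
move=> h1 h2; exists (clsL p q ((y.1 - x.1)%N, (y.2 - x.2)%N)).
by rewrite addL_clsL /addF /=; congr clsL; case: y h1 h2 => a b /= *; congr pair; lia.
Qed.

Lemma leLP (a b : Lam p q) : leL a b ->
  exists x y, [/\ a = clsL p q x, b = clsL p q y, (x.1 <= y.1)%N & (x.2 <= y.2)%N].
Proof.
move=> [c <-]; have [x ->] := clsLP a; have [u ->] := clsLP c.
by exists x, (addF x u); rewrite addL_clsL; split => //=; lia.
Qed.

Lemma leL_refl (a : Lam p q) : leL a a.
Proof. by have [x ->] := clsLP a; apply: leL_clsL. Qed.

Lemma leL_trans (a b c : Lam p q) : leL a b -> leL b c -> leL a c.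
Proof.
move=> [u <-] [v <-].
have [x ->] := clsLP a; have [y ->] := clsLP u; have [z ->] := clsLP v.
exists (clsL p q (addF y z)); rewrite !addL_clsL; congr clsL.
by rewrite /addF /=; congr pair; lia.
Qed.

Lemma leL0 (a : Lam p q) : leL (zeroL p q) a.
Proof. by have [x ->] := clsLP a; apply: leL_clsL. Qed.

Lemma ltL0 (a : Lam p q) : a <> zeroL p q -> ltL (zeroL p q) a.
Proof. by move=> a0; split; [exact: leL0 | exact: nesym]. Qed.

Hypotheses (p_gt0 : (0 < p)%N) (q_gt0 : (0 < q)%N).

Lemma degF_eq0 x : degF x = 0%N -> x = (0%N, 0%N).
Proof. by case: x => m n; rewrite /degF /= => h; congr pair; nia. Qed.

Lemma degL_ltL (a b : Lam p q) : leL a b -> a <> b -> (degL a < degL b)%N.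
Proof.
move=> [u <-]; have [x ->] := clsLP a; have [y ->] := clsLP u.
rewrite addL_clsL !degL_clsL => neq.
have y_neq0 : y <> (0%N, 0%N).
  by move=> y0; apply: neq; rewrite y0 /addF; case: x => m n /=; rewrite !addn0.
have : degF y <> 0%N by move/degF_eq0.
by rewrite /degF /addF /=; lia.
Qed.

Lemma degL_leL (a b : Lam p q) : leL a b -> (degL a <= degL b)%N.
Proof. by move=> ab; have [->//|/(degL_ltL ab)/ltnW] := pselect (a = b). Qed.

Lemma leL_antisym (a b : Lam p q) : leL a b -> leL b a -> a = b.
Proof.
move=> ab ba; apply: contrapT => neq.
by have := degL_ltL ab neq; have := degL_ltL ba (nesym neq); lia.
Qed.

Lemma finite_leL (l : Lam p q) : finite_set [set m | leL m l].
Proof.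
pose D := degL l.
apply: (@sub_finite_set _ _ (clsL p q @` (`I_D.+1 `*` `I_D.+1))).
  move=> m /degL_leL; rewrite /D /degL /degF => deg_le.
  by exists (repL m); rewrite ?repLK //; split => /=; nia.
exact/finite_image/finite_setX; exact: finite_II.
Qed.

Lemma finite_ointL (a b : Lam p q) : finite_set (ointL a b).
Proof. by apply: sub_finite_set (finite_leL b) => m [_ []]. Qed.

End Lambda.

Lemma tauE p r a b : (b < p)%N -> tau p r (a * p + b) = (a * r + minn b (r - 1))%N.
Proof.
move=> b_lt; have p_gt0 : (0 < p)%N by case: p b_lt.
by rewrite /tau divnMDl // divn_small // addn0 modnMDl modn_small.
Qed.

Lemma tauDr p r m : (0 < p)%N -> tau p r (m + p) = (tau p r m + r)%N.
Proof.
move=> p_gt0; have m_eq := divn_eq m p.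
rewrite (_ : m + p = (m %/ p).+1 * p + m %% p)%N; last by rewrite mulSn; lia.
by rewrite [in RHS](divn_eq m p) !tauE ?ltn_mod // mulSn; lia.
Qed.

Lemma tau_homo p r : (0 < p)%N -> {homo tau p r : m n / (m <= n)%N}.
Proof.
move=> p_gt0 m n le_mn; rewrite (divn_eq m p) (divn_eq n p) !tauE ?ltn_mod //.
have := leq_div2r p le_mn; rewrite leq_eqVlt => /orP[/eqP eq_div|lt_div].
  by have := divn_eq m p; have := divn_eq n p; lia.
have : ((m %/ p).+1 * r <= n %/ p * r)%N by rewrite leq_mul2r lt_div orbT.
by rewrite mulSn; lia.
Qed.

Lemma tau_tau_le p m : (2 <= p)%N -> (tau 2 p (tau p 2 m) <= m)%N.
Proof.
move=> p_ge2; rewrite (divn_eq m p) tauE ?ltn_mod; last lia.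
have := ltn_mod m p; have [->|m_mod] := eqVneq (m %% p) 0%N => lt_mod.
  by rewrite (_ : minn 0 _ = 0)%N // addn0 -[(_ * 2)%N]addn0 tauE //; lia.
by rewrite (_ : minn _ _ = 1)%N ?tauE //; lia.
Qed.

Lemma tau_tauK p : (2 <= p)%N -> cancel (tau 2 p) (tau p 2).
Proof.
move=> p_ge2 m; rewrite [in LHS](divn_eq m 2) tauE ?ltn_mod //.
have := ltn_mod m 2 => lt_mod.
by rewrite (_ : minn _ _ = m %% 2)%N ?tauE ?[RHS](divn_eq m 2); lia.
Qed.

Lemma tau_eq0 p r m : (0 < p)%N -> (2 <= r)%N -> tau p r m = 0%N -> m = 0%N.
Proof.
move=> p_gt0 r_ge2; rewrite (divn_eq m p) tauE ?ltn_mod // => /eqP.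
have r_neq0 : (r == 0)%N = false by lia.
by rewrite addn_eq0 muln_eq0 r_neq0 orbF => /andP[/eqP-> /eqP]; lia.
Qed.

Section TransitionMap.
Variables (p q r s : nat).
Hypotheses (p_gt0 : (0 < p)%N) (q_gt0 : (0 < q)%N).

Definition tauF (x : freeM) : freeM := (tau p r x.1, tau q s x.2).

Lemma congF_tauF x y : congF p q x y -> congF r s (tauF x) (tauF y).
Proof.
elim=> [a b [l [-> ->]]|a|a b _|a b c _ h1 _]; last 3 first.
- exact: rst_refl.
- exact: rst_sym.
- exact: rst_trans h1.
by apply: rst_step; exists (tauF l); rewrite /tauF /addF /= !addn0 !tauDr.
Qed.

Lemma Tmap_clsL x : Tmap p q r s (clsL p q x) = clsL r s (tauF x).
Proof. exact/clsL_congF/congF_tauF/repL_clsL. Qed.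

Lemma Tmap_leL (a b : Lam p q) : leL a b -> leL (Tmap p q r s a) (Tmap p q r s b).
Proof.
move=> /leLP [x [y [-> -> le1 le2]]]; rewrite !Tmap_clsL.
by apply: leL_clsL; [exact: tau_homo | exact: tau_homo].
Qed.

Lemma Tmap_eq0 (a : Lam p q) : (2 <= r)%N -> (2 <= s)%N ->
  Tmap p q r s a = zeroL r s -> a = zeroL p q.
Proof.
move=> r_ge2 s_ge2.
have r_gt0 : (0 < r)%N by lia.
have s_gt0 : (0 < s)%N by lia.
have [x ->] := clsLP a; rewrite Tmap_clsL => /congF_clsL /congF_degF.
rewrite [degF _ _ (0%N, 0%N)]/degF /= !muln0 addn0 => deg0.
have := degF_eq0 r_gt0 s_gt0 deg0.
by case: x {deg0} => m n [/(tau_eq0 p_gt0 r_ge2) -> /(tau_eq0 q_gt0 s_ge2) ->].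
Qed.

End TransitionMap.

Local Open Scope classical_set_scope.
Local Open Scope ring_scope.

(** * Realizations of finite posets *)

Lemma big_if_eq (M : nmodType) (T : eqType) (s : seq T) (a : T) (c : M) :
  uniq s -> a \in s -> \sum_(y <- s) (if a == y then c else 0) = c.
Proof.
move=> s_uniq a_in; rewrite -big_mkcond -big_filter.
by rewrite (@eq_filter _ _ (pred1 a)) ?filter_pred1_uniq ?big_seq1 // => y; exact: eq_sym.
Qed.

Lemma sum_gt0_exists (R : realDomainType) (I : eqType) (s : seq I) (F : I -> R) :
  0 < \sum_(i <- s) F i -> exists2 i, i \in s & 0 < F i.
Proof.
move=> sum_gt0; apply/hasP; apply: contraTT sum_gt0 => /hasPn F_le0.
by rewrite -leNgt big_seq sumr_le0 // => i /F_le0; rewrite -leNgt.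
Qed.

Lemma continuous_ptws (R : realType) (Z : topologicalType) (W : Type)
    (F : Z -> W -> R) :
  (forall y, continuous (F^~ y)) -> continuous F.
Proof.
move=> F_cont z; apply/cvg_sup => y; apply/cvg_image.
  by rewrite eqEsubset; split => r // _; exists (fun=> r).
move=> U U_nbhs; exists [set f : W -> R | U (f y)]; first exact: F_cont.
by rewrite eqEsubset; split => r; [case=> f ? <- | exists (fun=> r)].
Qed.

Lemma continuous_sum (R : realType) (Z : topologicalType) (I : Type) (s : seq I)
    (G : I -> Z -> R) :
  (forall i, continuous (G i)) -> continuous (fun z => \sum_(i <- s) G i z).
Proof.
move=> G_cont; elim: s => [|i s IH] z.
  by under eq_fun do rewrite big_nil; exact: cst_continuous.
by under eq_fun do rewrite big_cons; apply: continuousD; [exact: G_cont | exact: IH].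
Qed.

Lemma continuous_segment (R : realType) (Z : topologicalType) (s a b : Z -> R) :
  continuous s -> continuous a -> continuous b ->
  continuous (fun z => (1 - s z) * a z + s z * b z).
Proof.
move=> s_cont a_cont b_cont z.
have one_minus_s : {for z, continuous (fun z => 1 - s z)}.
  by apply: cvgB; [exact: cvg_cst | exact: s_cont].
exact: (continuousD (continuousM one_minus_s (a_cont z))
  (continuousM (s_cont z) (b_cont z))).
Qed.

Lemma in_fset_setE (T : choiceType) (A : set T) :
  finite_set A -> forall x, (x \in fset_set A) = A x :> Prop.
Proof. by move=> finA x; rewrite in_fset_set // in_setE. Qed.

Definition monotone_on (V W : Type) (leV : V -> V -> Prop) (leW : W -> W -> Prop)
    (P : set V) (f : V -> W) :=
  forall u v, P u -> P v -> leV u v -> leW (f u) (f v).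

Definition rmap (R : realType) (V W : choiceType) (P : set V) (f : V -> W)
    (w : V -> R) : W -> R :=
  fun y => \sum_(x <- fset_set P) (if f x == y then w x else 0).

Section RealizationMap.
Variables (R : realType) (V W : choiceType).
Variables (leV : V -> V -> Prop) (leW : W -> W -> Prop) (P : set V) (Q : set W).
Hypotheses (finP : finite_set P) (finQ : finite_set Q).

Lemma rmap_gt0 (f : V -> W) (w : V -> R) y :
  0 < rmap P f w y -> exists x, [/\ P x, f x = y & 0 < w x].
Proof.
move=> /sum_gt0_exists [x]; rewrite (in_fset_setE finP) => Px.
by case: eqP => [fx_y w_gt0|_]; [exists x | rewrite ltxx].
Qed.

Lemma realization_sum1 (w : V -> R) :
  realization R leV P w -> \sum_(x <- fset_set P) w x = 1.
Proof. by move=> [_ [_ [+ _]]]; rewrite fsbig_finite. Qed.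

Lemma rmap_realization (f : V -> W) (w : V -> R) :
  set_fun P Q f -> monotone_on leV leW P f ->
  realization R leV P w -> realization R leW Q (rmap P f w).
Proof.
move=> Pf mf w_real; have [w_ge0 [_ [_ w_chain]]] := w_real.
split; [|split; [|split]].
- by move=> y; apply: sumr_ge0 => x _; case: ifP => // _; exact: w_ge0.
- move=> y Qy_false; apply: big1_seq => x /= /[!(in_fset_setE finP)] Px.
  by case: eqP => // fx_y; move: (Pf x Px); rewrite fx_y.
- rewrite fsbig_finite // /rmap exchange_big /= -(realization_sum1 w_real).
  apply: eq_big_seq => x /[!(in_fset_setE finP)] Px.
  by rewrite big_if_eq ?fset_uniq // (in_fset_setE finQ); exact: Pf.
- move=> u v /rmap_gt0 [x [Px <- wx]] /rmap_gt0 [x' [Px' <- wx']].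
  by case: (w_chain x x' wx wx') => h; [left|right]; apply: mf.
Qed.

Lemma eq_rmap (f g : V -> W) :
  (forall x, P x -> f x = g x) -> rmap (R := R) P f = rmap P g.
Proof.
move=> fg; apply/funext => w; apply/funext => y.
by apply: eq_big_seq => x /[!(in_fset_setE finP)] /fg ->.
Qed.

Lemma rmap_id (w : V -> R) : realization R leV P w -> rmap P id w = w.
Proof.
move=> [_ [w_supp _]]; apply/funext => y; rewrite /rmap.
have [Py|Py_false] := pselect (P y).
  rewrite (eq_bigr (fun x => if y == x then w y else 0)) => [|x _].
    by rewrite big_if_eq ?fset_uniq // (in_fset_setE finP).
  by rewrite eq_sym; case: eqP => // ->.
rewrite w_supp // big1_seq // => x /[!(in_fset_setE finP)] Px.
by case: eqP => // xy; rewrite xy in Px.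
Qed.

Lemma rmap_comp (U : choiceType) (f : V -> W) (g : W -> U) (w : V -> R) :
  set_fun P Q f -> rmap Q g (rmap P f w) = rmap P (g \o f) w.
Proof.
move=> Pf; apply/funext => z; rewrite /rmap.
transitivity (\sum_(y <- fset_set Q) \sum_(x <- fset_set P)
    (if f x == y then if g y == z then w x else 0 else 0)).
  apply: eq_bigr => y _; case: (g y == z); first by apply: eq_bigr => x _.
  by rewrite big1 // => x _; case: ifP.
rewrite exchange_big /=; apply: eq_big_seq => x /[!(in_fset_setE finP)] Px.
rewrite (eq_bigr (fun y => if f x == y then if g (f x) == z then w x else 0 else 0)).
  by rewrite big_if_eq ?fset_uniq // (in_fset_setE finQ); exact: Pf.
by move=> y _; case: eqP => // <-.
Qed.

Lemma rmap_coord_continuous (f : V -> W) y :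
  continuous (fun w : V -> R => rmap P f w y).
Proof.
apply: continuous_sum => x.
by case: eqP => _; [exact: proj_continuous | exact: cst_continuous].
Qed.

Lemma rmap_continuous (f : V -> W) : continuous (rmap (R := R) P f).
Proof. exact/continuous_ptws/rmap_coord_continuous. Qed.

Lemma realization_vertex x : P x -> leV x x -> realization R leV P (fun v => (v == x)%:R).
Proof.
move=> Px le_xx; split; [|split; [|split]].
- by move=> v; rewrite ler0n.
- by move=> v; case: eqP => // -> /(_ Px).
- rewrite fsbig_finite // (eq_bigr (fun v => if x == v then 1 else 0)) => [|v _].
    by rewrite big_if_eq ?fset_uniq // (in_fset_setE finP).
  by rewrite eq_sym; case: eqP.
- move=> u v; case: eqP => [-> _|]; last by rewrite ltxx.
  by case: eqP => [-> _|]; [left | rewrite ltxx].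
Qed.

Lemma rmap_cst (w : V -> R) (y0 : W) :
  realization R leV P w -> rmap P (fun=> y0) w = fun y => (y == y0)%:R.
Proof.
move=> Xw; apply/funext => y; rewrite /rmap.
by have [_|_] /= := eqVneq y y0; [exact: realization_sum1 Xw | rewrite big1].
Qed.

End RealizationMap.

Section Homotopy.
Variables (R : realType) (S T : topologicalType) (X : set S) (Y : set T).

(* Unlike [homotopic_on], the homotopy is defined and continuous on all of
   [S * R]; this makes concatenation a plain pasting argument. *)
Definition homotopic (F G : S -> T) := exists H : S * R -> T,
  [/\ continuous H, forall x t, X x -> unitI R t -> Y (H (x, t)),
      forall x, H (x, 0) = F x & forall x, H (x, 1) = G x].

Lemma continuous_reparam (Z : topologicalType) (H : S * R -> Z) (a b : R) :
  continuous H -> continuous (fun z : S * R => H (z.1, a * z.2 + b)).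
Proof.
move=> H_cont z; apply: continuous_comp; last exact: H_cont.
have affine_cont : {for z, continuous (fun z : S * R => a * z.2 + b)}.
  by apply: cvgD; [apply: cvgM; [exact: cvg_cst | exact: cvg_snd] | exact: cvg_cst].
exact: cvg_pair cvg_fst affine_cont.
Qed.

Lemma continuous_glue_snd (Z : topologicalType) (c : R) (F G : S * R -> Z) :
  continuous F -> continuous G -> (forall x, F (x, c) = G (x, c)) ->
  continuous (fun z => if z.2 <= c then F z else G z).
Proof.
move=> F_cont G_cont FG; apply/continuous_subspace_setT.
have -> : [set: S * R] = [set z | z.2 <= c] `|` [set z | c <= z.2].
  apply/seteqP; split => z // _.
  by case: (lerP z.2 c) => zc; [left | right; exact: ltW].
have snd_cont : continuous (@snd S R) by move=> z; exact: cvg_snd.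
apply: withinU_continuous.
- apply: (@preimage_closed _ _ snd [set t | t <= c]); last exact: closed_le.
  by move=> z _; exact: snd_cont.
- apply: (@preimage_closed _ _ snd [set t | c <= t]); last exact: closed_ge.
  by move=> z _; exact: snd_cont.
- apply: (@subspace_eq_continuous _ _ _ F); last exact: continuous_subspaceT.
  by move=> z /[!in_setE] /= zc; rewrite /from_subspace zc.
- apply: (@subspace_eq_continuous _ _ _ G); last exact: continuous_subspaceT.
  move=> [x t] /[!in_setE] /= ct; rewrite /from_subspace /=; case: ifP => // tc.
  by have -> : t = c by apply/eqP; rewrite eq_le ct tc.
Qed.

Lemma homotopic_sym F G : homotopic F G -> homotopic G F.
Proof.
move=> [H [H_cont HY H0 H1]]; exists (fun z => H (z.1, -1 * z.2 + 1)); split.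
- exact: continuous_reparam.
- by move=> x t Xx /andP[t_ge0 t_le1]; apply: HY => //=; apply/andP; split; lra.
- by move=> x /=; rewrite mulr0 add0r.
- by move=> x /=; rewrite mulr1 addNr.
Qed.

Lemma homotopic_trans F G K : homotopic F G -> homotopic G K -> homotopic F K.
Proof.
move=> [H1 [H1_cont H1Y H10 H11]] [H2 [H2_cont H2Y H20 H21]].
exists (fun z => if z.2 <= 2^-1 then H1 (z.1, 2 * z.2 + 0) else H2 (z.1, 2 * z.2 + -1)).
split.
- apply: continuous_glue_snd; [exact: continuous_reparam.. |] => x.
  by rewrite mulfV ?pnatr_eq0 // addr0 subrr H11 H20.
- move=> x t Xx /andP[t_ge0 t_le1] /=; case: ifP => t_half.
    by apply: H1Y => //; apply/andP; split; lra.
  by apply: H2Y => //; move/negbT: t_half; rewrite -ltNge => ?; apply/andP; split; lra.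
- by move=> x /=; rewrite ifT ?mulr0 ?addr0 ?H10 // invr_ge0 ler0n.
- move=> x /=; rewrite ifF; last by apply/negbTE; rewrite -ltNge invf_lt1 ?ltr1n.
  by rewrite mulr1 (_ : 2 + -1 = 1 :> R) ?H21 //; lra.
Qed.

Lemma homotopic_homotopic_on F G F' G' : homotopic F G ->
  (forall x, X x -> F' x = F x) -> (forall x, X x -> G' x = G x) ->
  homotopic_on R X Y F' G'.
Proof.
move=> [H [H_cont HY H0 H1]] FF' GG'; exists H; split; [|split; [|split]].
- exact: continuous_subspaceT.
- by move=> x t Xx It; exact: HY.
- by move=> x Xx; rewrite H0 FF'.
- by move=> x Xx; rewrite H1 GG'.
Qed.

Lemma homotopy_equivalent_pt x0 : X x0 -> homotopic_on R X X (fun=> x0) id ->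
  homotopy_equivalent R X (pt R).
Proof.
move=> Xx0 X_contr; exists (fun=> 0), (fun=> x0).
split; [|split; [|split; [|split; [|split]]]].
- exact/continuous_subspaceT/cst_continuous.
- by move=> _ [x _ <-].
- exact/continuous_subspaceT/cst_continuous.
- by move=> _ [t _ <-].
- exact: X_contr.
exists (fun=> 0); split; [|split; [|split]].
- exact/continuous_subspaceT/cst_continuous.
- by [].
- by [].
- by move=> t ->.
Qed.

End Homotopy.

(** * Order homotopy *)

Section OrderHomotopy.
Variables (R : realType) (V W : choiceType).
Variables (leV : V -> V -> Prop) (leW : W -> W -> Prop) (P : set V) (Q : set W).
Hypotheses (finP : finite_set P) (finQ : finite_set Q).
Local Notation X := (realization R leV P).
Local Notation Y := (realization R leW Q).
Local Notation monotone := (monotone_on leV leW P).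

Section Carrier.
Variables (f g : V -> W).
Hypotheses (Pf : set_fun P Q f) (Pg : set_fun P Q g).
Hypotheses (mf : monotone f) (mg : monotone g).
Hypothesis fg_comparable : forall x x', P x -> P x' -> leV x x' \/ leV x' x ->
  leW (f x) (g x') \/ leW (g x') (f x).

Lemma segment_realization w t : X w -> unitI R t ->
  Y (fun y => (1 - t) * rmap P f w y + t * rmap P g w y).
Proof.
move=> Xw /andP[t_ge0 t_le1].
have [f_ge0 [f_supp [f_sum _]]] := rmap_realization finP finQ Pf mf Xw.
have [g_ge0 [g_supp [g_sum _]]] := rmap_realization finP finQ Pg mg Xw.
have [_ [_ [_ w_chain]]] := Xw.
split; [|split; [|split]].
- by move=> y; rewrite addr_ge0 // mulr_ge0 // subr_ge0.
- by move=> y Qy_false; rewrite f_supp // g_supp // !mulr0 addr0.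
- rewrite fsbig_finite // big_split /= -!mulr_sumr -!fsbig_finite // f_sum g_sum.
  by rewrite !mulr1 subrK.
have from_vertex y : 0 < (1 - t) * rmap P f w y + t * rmap P g w y ->
    exists x, [/\ P x, 0 < w x & f x = y \/ g x = y].
  move=> y_gt0; have [fy_gt0|fy_le0] := ltP 0 (rmap P f w y).
    by have [x [Px <- wx]] := rmap_gt0 finP fy_gt0; exists x; split => //; left.
  have [gy_gt0|gy_le0] := ltP 0 (rmap P g w y).
    by have [x [Px <- wx]] := rmap_gt0 finP gy_gt0; exists x; split => //; right.
  move: y_gt0; rewrite ltNge => /negP[]; rewrite -[0](addr0 0).
  by apply: lerD; apply: mulr_ge0_le0; rewrite // subr_ge0.
move=> u v /from_vertex[x [Px wx ux]] /from_vertex[x' [Px' wx' vx']].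
have cmp := w_chain x x' wx wx'.
case: ux => <-; case: vx' => <-.
- by case: cmp => h; [left|right]; apply: mf.
- exact: fg_comparable.
- by case: (fg_comparable Px' Px (proj1 (or_comm _ _) cmp)) => h; [right|left].
- by case: cmp => h; [left|right]; apply: mg.
Qed.

(* The straight-line homotopy; [fg_comparable] keeps its values supported on
   chains. *)
Lemma rmap_homotopic_comparable : homotopic R X Y (rmap P f) (rmap P g).
Proof.
exists (fun z y => (1 - z.2) * rmap P f z.1 y + z.2 * rmap P g z.1 y); split.
- have fst_cont : continuous (@fst (V -> R) R) by move=> [w t]; exact: cvg_fst.
  have coord (h : V -> W) y : continuous (fun z : (V -> R) * R => rmap P h z.1 y).
    by move=> z; have := continuous_comp (fst_cont z) (@rmap_coord_continuous R V W P h y _).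
  apply: continuous_ptws => y; apply: continuous_segment => //.
  by move=> [w t]; exact: cvg_snd.
- by move=> w t; exact: segment_realization.
- by move=> w; apply/funext => y /=; rewrite subr0 mul1r mul0r addr0.
- by move=> w; apply/funext => y /=; rewrite subrr mul0r mul1r add0r.
Qed.

End Carrier.

Lemma rmap_homotopic_refl f : set_fun P Q f -> monotone f ->
  homotopic R X Y (rmap P f) (rmap P f).
Proof.
move=> Pf mf; apply: rmap_homotopic_comparable => // x x' Px Px' [h|h].
- by left; exact: mf.
- by right; exact: mf.
Qed.

Section Ranked.
Hypotheses (leW_refl : forall y, leW y y)
  (leW_trans : forall a b c, leW a b -> leW b c -> leW a c).
Variable rk : V -> nat.
Hypothesis rk_lt : forall u v, P u -> P v -> leV u v -> u <> v -> (rk u < rk v)%N.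
Variable g : V -> W.
Hypotheses (Pg : set_fun P Q g) (mg : monotone g).

Lemma rk_le u v : P u -> P v -> leV u v -> (rk u <= rk v)%N.
Proof.
move=> Pu Pv uv; have [<-//|neq] := pselect (u = v).
exact/ltnW/(rk_lt Pu Pv uv neq).
Qed.

Definition switch_at (k : nat) (f : V -> W) (x : V) : W :=
  if (k <= rk x)%N then g x else f x.

Lemma switch_at_set_fun k f : set_fun P Q f -> set_fun P Q (switch_at k f).
Proof. by move=> Pf x Px; rewrite /switch_at; case: ifP => _; [exact: Pg | exact: Pf]. Qed.

Lemma switch_at_le k f : (forall x, P x -> leW (f x) (g x)) ->
  forall x, P x -> leW (switch_at k f x) (g x).
Proof.
by move=> fg x Px; rewrite /switch_at; case: ifP => _; [exact: leW_refl | exact: fg].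
Qed.

Lemma switch_at_monotone k f : monotone f -> (forall x, P x -> leW (f x) (g x)) ->
  monotone (switch_at k f).
Proof.
move=> mf fg u v Pu Pv uv; rewrite /switch_at; have := rk_le Pu Pv uv.
case: (leqP k (rk u)) => ku; case: (leqP k (rk v)) => kv rk_uv.
- exact: mg.
- by exfalso; lia.
- exact: leW_trans (fg u Pu) (mg Pu Pv uv).
- exact: mf.
Qed.

Lemma rmap_homotopic_switch k f : set_fun P Q f -> monotone f ->
  (forall x, P x -> leW (f x) (g x)) ->
  (forall x, P x -> (k < rk x)%N -> f x = g x) ->
  homotopic R X Y (rmap P f) (rmap P (switch_at k f)).
Proof.
move=> Pf mf fg fg_above; apply: rmap_homotopic_comparable.
- exact: Pf.
- exact: switch_at_set_fun.
- exact: mf.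
- exact: switch_at_monotone.
move=> x x' Px Px' cmp; rewrite /switch_at.
case: (leqP k (rk x')) => kx'; last by case: cmp => h; [left|right]; apply: mf.
case: cmp => [xx'|x'x]; first by left; exact: leW_trans (fg x Px) (mg Px Px' xx').
have [<-|x'_neq_x] := pselect (x' = x); first by left; exact: fg.
right; rewrite fg_above //; first exact: mg.
exact: leq_ltn_trans kx' (rk_lt Px' Px x'x x'_neq_x).
Qed.

(* Quillen's order homotopy lemma, by moving [f] up to [g] one rank at a
   time, from the top. *)
Lemma rmap_homotopic_le f : set_fun P Q f -> monotone f ->
  (forall x, P x -> leW (f x) (g x)) -> homotopic R X Y (rmap P f) (rmap P g).
Proof.
suff agree_above k : forall f, set_fun P Q f -> monotone f ->
    (forall x, P x -> leW (f x) (g x)) ->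
    (forall x, P x -> (k <= rk x)%N -> f x = g x) ->
    homotopic R X Y (rmap P f) (rmap P g).
  move=> Pf mf fg; apply: (agree_above (\max_(x <- fset_set P) rk x).+1) => // x Px.
  by rewrite ltnNge leq_bigmax_seq // (in_fset_setE finP).
elim: k => [|k IH] {}f Pf mf fg f_eq_g.
  have /(eq_rmap R finP) -> : forall x, P x -> f x = g x.
    by move=> x Px; exact: f_eq_g.
  exact: rmap_homotopic_refl.
apply: homotopic_trans (rmap_homotopic_switch Pf mf fg f_eq_g) (IH _ _ _ _ _).
- exact: switch_at_set_fun.
- exact: switch_at_monotone.
- exact: switch_at_le.
- by move=> x Px kx; rewrite /switch_at kx.
Qed.

End Ranked.

End OrderHomotopy.

Section RealizationEquivalence.
Variables (R : realType) (V W : choiceType).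
Variables (leV : V -> V -> Prop) (leW : W -> W -> Prop) (P : set V) (Q : set W).
Hypotheses (finP : finite_set P) (finQ : finite_set Q).
Hypotheses (leV_refl : forall x, leV x x)
  (leV_trans : forall a b c, leV a b -> leV b c -> leV a c).
Variable rk : V -> nat.
Hypothesis rk_lt : forall u v, P u -> P v -> leV u v -> u <> v -> (rk u < rk v)%N.
Local Notation X := (realization R leV P).
Local Notation Y := (realization R leW Q).

Lemma realization_homotopy_equivalent (f : V -> W) (g : W -> V) :
  set_fun P Q f -> set_fun Q P g ->
  monotone_on leV leW P f -> monotone_on leW leV Q g ->
  (forall y, Q y -> f (g y) = y) -> (forall x, P x -> leV (g (f x)) x) ->
  homotopy_equivalent R X Y.
Proof.
move=> Pf Qg mf mg fgK gf_le.
have Pgf : set_fun P P (g \o f) by move=> x Px; exact/Qg/Pf.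
have mgf : monotone_on leV leV P (g \o f).
  by move=> u v Pu Pv uv; apply: mg; [exact: Pf | exact: Pf | exact: mf].
have gf_id : homotopic R X X (rmap P (g \o f)) (rmap P id).
  by apply: (rmap_homotopic_le R finP finP leV_refl leV_trans rk_lt).
have fg_id : homotopic R Y Y (rmap Q id) (rmap Q id).
  exact: rmap_homotopic_refl.
exists (rmap P f), (rmap Q g); split; [|split; [|split; [|split; [|split]]]].
- exact/continuous_subspaceT/rmap_continuous.
- by move=> _ [w Xw <-]; move: (rmap_realization finP finQ Pf mf Xw).
- exact/continuous_subspaceT/rmap_continuous.
- by move=> _ [w Yw <-]; move: (rmap_realization finQ finP Qg mg Yw).
- apply: (homotopic_homotopic_on gf_id) => w Xw /=.
    by rewrite (rmap_comp finP finQ g w Pf).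
  by rewrite (rmap_id finP Xw).
- apply: (homotopic_homotopic_on fg_id) => w Yw /=; last by rewrite (rmap_id finQ Yw).
  by rewrite (rmap_comp finQ finP f w Qg) (eq_rmap R finQ fgK) (rmap_id finQ Yw).
Qed.

(* |c| is homotopic both to the identity and to the constant map at the
   vertex [x0]. *)
Lemma realization_contractible (c : V -> V) x0 : P x0 ->
  set_fun P P c -> monotone_on leV leV P c ->
  (forall x, P x -> leV (c x) x) -> (forall x, P x -> leV (c x) x0) ->
  homotopy_equivalent R X (pt R).
Proof.
move=> Px0 Pc mc c_le c_le_x0.
apply: (homotopy_equivalent_pt (realization_vertex R finP Px0 (leV_refl x0))).
have c_id : homotopic R X X (rmap P c) (rmap P id).
  by apply: (rmap_homotopic_le R finP finP leV_refl leV_trans rk_lt).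
have c_x0 : homotopic R X X (rmap P c) (rmap P (fun=> x0)).
  by apply: (rmap_homotopic_le R finP finP leV_refl leV_trans rk_lt) => // x Px.
apply: (homotopic_homotopic_on (homotopic_trans (homotopic_sym c_x0) c_id)).
- by move=> w Xw; rewrite (rmap_cst finP x0 Xw).
- by move=> w Xw; rewrite (rmap_id finP Xw).
Qed.

End RealizationEquivalence.

(** * Frobenius complexes *)

Section Frobenius.
Variables (R : realType) (p q : nat).
Hypotheses (p_ge2 : (2 <= p)%N) (q_ge2 : (2 <= q)%N).
Let p_gt0 : (0 < p)%N := ltnW p_ge2.
Let q_gt0 : (0 < q)%N := ltnW q_ge2.
Local Notation T := (Tmap p q 2 2).
Local Notation T' := (Tmap 2 2 p q).

Lemma TmapTmap_le (a : Lam p q) : leL (T' (T a)) a.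
Proof.
have [x ->] := clsLP a; rewrite !Tmap_clsL //.
by apply: leL_clsL; apply: tau_tau_le.
Qed.

Lemma TmapK : cancel T' T.
Proof.
move=> b; have [y ->] := clsLP b; rewrite !Tmap_clsL //.
by rewrite /tauF /= !tau_tauK //; case: y.
Qed.

Lemma TmapTmap_eq0 (a : Lam p q) : T' (T a) = zeroL p q -> a = zeroL p q.
Proof.
by move=> /(Tmap_eq0 (ltn0Sn 1) (ltn0Sn 1) p_ge2 q_ge2)
  /(Tmap_eq0 p_gt0 q_gt0 (leqnn 2) (leqnn 2)).
Qed.

Variable lam : Lam p q.
Hypothesis lam_neq0 : lam <> zeroL p q.
Local Notation P := (ointL (zeroL p q) lam).
Local Notation Q := (ointL (zeroL 2 2) (T lam)).

Lemma degL_ltL_on (u v : Lam p q) : P u -> P v -> leL u v -> u <> v ->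
  (degL u < degL v)%N.
Proof. by move=> _ _; exact: degL_ltL. Qed.

Lemma set_fun_TmapTmap : set_fun P P (T' \o T).
Proof.
move=> m [[_ m_neq0] [m_le m_neq]] /=; split.
  by apply: ltL0 => /TmapTmap_eq0 m0; apply: m_neq0.
split; first exact: leL_trans (TmapTmap_le m) m_le.
move=> cm_eq; apply: m_neq; apply: leL_antisym => //.
by rewrite -{1}cm_eq; exact: TmapTmap_le.
Qed.

Lemma monotone_Tmap r s r' s' (U : set (Lam r s)) :
  (0 < r)%N -> (0 < s)%N -> monotone_on (@leL r s) (@leL r' s') U (Tmap r s r' s').
Proof. by move=> r_gt0 s_gt0 u v _ _; exact: Tmap_leL. Qed.

Section Fixed.
Hypothesis lam_fixed : T' (T lam) = lam.

Lemma set_fun_Tmap : set_fun P Q T.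
Proof.
move=> m [[_ m_neq0] [m_le m_neq]]; split.
  by apply: ltL0 => /(Tmap_eq0 p_gt0 q_gt0 (leqnn 2) (leqnn 2)) m0; apply: m_neq0.
split; first exact: Tmap_leL.
move=> Tm_eq; apply: m_neq; apply: leL_antisym => //.
by rewrite -lam_fixed -Tm_eq; exact: TmapTmap_le.
Qed.

Lemma set_fun_Tmap' : set_fun Q P T'.
Proof.
move=> m [[_ m_neq0] [m_le m_neq]]; split.
  by apply: ltL0 => /(Tmap_eq0 (ltn0Sn 1) (ltn0Sn 1) p_ge2 q_ge2) m0; apply: m_neq0.
split; first by rewrite -lam_fixed; exact: Tmap_leL.
by move=> T'm_eq; apply: m_neq; rewrite -T'm_eq TmapK.
Qed.

Lemma Frob_fixed : homotopy_equivalent R (Frob R lam) (Frob R (T lam)).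
Proof.
rewrite /Frob; apply: (realization_homotopy_equivalent R
  (finite_ointL p_gt0 q_gt0 _ _) (finite_ointL (ltn0Sn 1) (ltn0Sn 1) _ _)
  (@leL_refl p q) (@leL_trans p q) degL_ltL_on set_fun_Tmap set_fun_Tmap').
- exact: monotone_Tmap.
- exact: monotone_Tmap.
- by move=> b _; exact: TmapK.
- by move=> a _; exact: TmapTmap_le.
Qed.

End Fixed.

Lemma Frob_moved : T' (T lam) <> lam -> homotopy_equivalent R (Frob R lam) (pt R).
Proof.
move=> lam_moved; rewrite /Frob.
apply: (realization_contractible R (finite_ointL p_gt0 q_gt0 _ _)
  (@leL_refl p q) (@leL_trans p q) degL_ltL_on (x0 := T' (T lam)) _ set_fun_TmapTmap).
- split; first by apply: ltL0 => /TmapTmap_eq0.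
  by split; [exact: TmapTmap_le | exact: lam_moved].
- by move=> u v _ _ uv /=; apply: Tmap_leL => //; apply: Tmap_leL.
- by move=> x _; exact: TmapTmap_le.
- by move=> x [_ [x_le _]] /=; apply: Tmap_leL => //; apply: Tmap_leL.
Qed.

End Frobenius.

Theorem theorem2p5 (R : realType) (p q : nat) (hp : (2 <= p)%N) (hq : (2 <= q)%N)
    (lam : Lam p q) (hlam : lam <> zeroL p q) :
  (Tmap 2 2 p q (Tmap p q 2 2 lam) = lam ->
     homotopy_equivalent R (Frob R lam) (Frob R (Tmap p q 2 2 lam))) /\
  (Tmap 2 2 p q (Tmap p q 2 2 lam) <> lam ->
     homotopy_equivalent R (Frob R lam) (pt R)).
Proof. by split; [exact: Frob_fixed | exact: Frob_moved]. Qed.
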